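(* In the affine Schur category $\mathcal{AS}$ over a commutative ring $\Bbbk$, for all integers $a\ge1$, $0\le r\le a$ and all $u\in\Bbbk$: $$U_{a,u}\circ(\omega_{a,r}\otimes 1_u)=(1_u\otimes\omega_{a,r})\circ U_{a,u},\qquad D_{u,a}\circ(1_u\otimes\omega_{a,r})=(\omega_{a,r}\otimes1_u)\circ D_{u,a}.$$
   Context: Let $\Bbbk$ be a commutative ring with $1$. The affine Schur category $\mathcal{AS}$ is the strict $\Bbbk$-linear monoidal category defined as follows. Generating objects: the integers $a\ge1$ (black strands of thickness $a$) and the elements $u\in\Bbbk$ (red strands labelled $u$); objects are finite words in these, tensor product being concatenation, written $(x_1,\dots,x_k)$ or $x_1\otimes\cdots\otimes x_k$. Generating morphisms, for $a,b\ge1$, $u\in\Bbbk$: merge $M_{a,b}:(a,b)\to(a+b)$, split $S_{a,b}:(a+b)\to(a,b)$, crossing $X_{a,b}:(a,b)\to(b,a)$, dot $\omega_a:(a)\to(a)$, traverse-up $U_{a,u}:(a,u)\to(u,a)$, traverse-down $D_{u,a}:(u,a)\to(a,u)$. Conventions: a black strand of thickness $0$ is the unit object and any merge, split or crossing involving a thickness-$0$ strand is an identity; $1_x$ is an identity. Derived morphisms: $\omega_{a,0}:=1_a$; $\omega_{a,r}:=M_{r,a-r}\circ(\omega_r\otimes1_{a-r})\circ S_{r,a-r}$ for $1\le r\le a$ (so $\omega_{a,a}=\omega_a$); $\omega_{a,r}:=0$ if $r<0$ or $r>a$; $S^{(a)}:(a)\to(1,\dots,1)$ and $M^{(a)}:(1,\dots,1)\to(a)$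 are iterated splits/merges; $g_r(u):=\sum_{i=0}^{r}(-1)^i\big(\prod_{j=0}^{i-1}(u+j)\big)\omega_{r,r-i}\in\mathrm{End}(r)$. Defining relations, for all $a,b,c,d,r\ge1$, $u\in\Bbbk$: (R1) $M_{a+b,c}(M_{a,b}\otimes1_c)=M_{a,b+c}(1_a\otimes M_{b,c})$, $(S_{a,b}\otimes1_c)S_{a+b,c}=(1_a\otimes S_{b,c})S_{a,b+c}$; (R2) if $a+c=b+d$: $S_{b,d}M_{a,c}=\sum(M_{s,c-t}\otimes M_{a-s,t})(1_s\otimes X_{a-s,c-t}\otimes1_t)(S_{s,a-s}\otimes S_{c-t,t})$ over $0\le s\le\min(a,b)$, $0\le t\le\min(c,d)$, $t-s=d-a$; (R3) $M_{a,b}S_{a,b}=\binom{a+b}{a}1_{a+b}$; (R4) $(\omega_b\otimes1_a)X_{a,b}=\sum_{t=0}^{\min(a,b)}t!\,(M_{t,b-t}\otimes M_{a-t,t})(1_t\otimes X_{a-t,b-t}\otimes1_t)(1_t\otimes1_{a-t}\otimes\omega_{b-t}\otimes1_t)(S_{t,a-t}\otimes S_{b-t,t})$ and $X_{b,a}(\omega_b\otimes1_a)=\sum_{t=0}^{\min(a,b)}t!\,(M_{t,a-t}\otimes M_{b-t,t})(1_t\otimes1_{a-t}\otimes\omega_{b-t}\otimes1_t)(1_t\otimes X_{b-t,a-t}\otimes1_t)(S_{t,b-t}\otimes S_{a-t,t})$; (R5) $S_{a,b}\omega_{a+b}=(\omega_a\otimes\omega_b)S_{a,b}$, $\omega_{a+b}M_{a,b}=M_{a,b}(\omega_a\otimes\omega_b)$;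 (R6) $M^{(a)}(\omega_1\otimes\cdots\otimes\omega_1)S^{(a)}=a!\,\omega_a$; (R7) $D_{u,r}U_{r,u}=g_r(u)\otimes1_u$, $U_{r,u}D_{u,r}=1_u\otimes g_r(u)$; (R8) $(D_{u,b}\otimes1_a)(1_u\otimes X_{a,b})(U_{a,u}\otimes1_b)=(1_b\otimes U_{a,u})(X_{a,b}\otimes1_u)(1_a\otimes D_{u,b})+\sum_{t=1}^{\min(a,b)}t!\,(M_{t,b-t}\otimes1_u\otimes M_{a-t,t})(1_t\otimes1_{b-t}\otimes U_{a-t,u}\otimes1_t)(1_t\otimes X_{a-t,b-t}\otimes1_u\otimes1_t)(1_t\otimes1_{a-t}\otimes D_{u,b-t}\otimes1_t)(S_{t,a-t}\otimes1_u\otimes S_{b-t,t})$; (R9) $(1_u\otimes S_{b,c})U_{b+c,u}=(U_{b,u}\otimes1_c)(1_b\otimes U_{c,u})(S_{b,c}\otimes1_u)$, $(S_{a,b}\otimes1_u)D_{u,a+b}=(1_a\otimes D_{u,b})(D_{u,a}\otimes1_b)(1_u\otimes S_{a,b})$, $D_{u,b+c}(1_u\otimes M_{b,c})=(M_{b,c}\otimes1_u)(1_b\otimes D_{u,c})(D_{u,b}\otimes1_c)$, $U_{a+b,u}(M_{a,b}\otimes1_u)=(1_u\otimes M_{a,b})(U_{a,u}\otimes1_b)(1_a\otimes U_{b,u})$. *)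

(* A presentation of the affine Schur category AS as the
   strict K-linear monoidal category generated by the given objects and
   morphisms modulo the relations (R1)-(R9): morphisms are (well-typed)
   formal terms modulo the smallest congruence [ASeq] containing the axioms of
   a strict K-linear monoidal category and (R1)-(R9). *)
From HB Require Import structures.
From mathcomp Require Import all_boot all_algebra.
Set Implicit Arguments. Unset Strict Implicit. Unset Printing Implicit Defensive.
Import GRing.Theory.

Section AffineSchur.
Variable K : comPzRingType.

(* generating objects: black strands of thickness a >= 1, red strands u : K *)
Inductive gen := Blk of nat | Red of K.
Definition obj := seq gen.

(* formal morphism terms; [TComp g f] stands for g \circ f *)
Inductive tm :=
| TId of obj
| TComp of tm & tm
| TTens of tm & tm
| TZero of obj & obj
| TAdd of tm & tm
| TScale of K & tm
| TMerge of nat & nat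
| TSplit of nat & nat
| TCross of nat & nat
| TDot of nat
| TUp of nat & K
| TDown of K & nat.

Fixpoint src (f : tm) : obj :=
  match f with
  | TId x => x | TComp _ f => src f | TTens f g => src f ++ src g
  | TZero x _ => x | TAdd f _ => src f | TScale _ f => src f
  | TMerge a b => [:: Blk a; Blk b] | TSplit a b => [:: Blk (a + b)]
  | TCross a b => [:: Blk a; Blk b] | TDot a => [:: Blk a]
  | TUp a u => [:: Blk a; Red u] | TDown u a => [:: Red u; Blk a]
  end.

Fixpoint tgt (f : tm) : obj :=
  match f with
  | TId x => x | TComp g _ => tgt g | TTens f g => tgt f ++ tgt g
  | TZero _ y => y | TAdd f _ => tgt f | TScale _ f => tgt f
  | TMerge a b => [:: Blk (a + b)] | TSplit a b => [:: Blk a; Blk b]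
  | TCross a b => [:: Blk b; Blk a] | TDot a => [:: Blk a]
  | TUp a u => [:: Red u; Blk a] | TDown u a => [:: Blk a; Red u]
  end.

Definition valid (x : obj) : bool :=
  all (fun g => if g is Blk a then (0 < a)%N else true) x.

Fixpoint wt (f : tm) : Prop :=
  match f with
  | TId x => valid x
  | TComp g f => [/\ wt g, wt f & tgt f = src g]
  | TTens f g => wt f /\ wt g
  | TZero x y => valid x /\ valid y
  | TAdd f g => [/\ wt f, wt g, src f = src g & tgt f = tgt g]
  | TScale _ f => wt f
  | TMerge a b | TSplit a b | TCross a b => (0 < a)%N /\ (0 < b)%N
  | TDot a | TUp a _ | TDown _ a => (0 < a)%N
  end.

(* smart constructors implementing the thickness-0 conventions *)
Definition blk (a : nat) : obj := if a is 0 then [::] else [:: Blk a].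
Definition idb (a : nat) : tm := TId (blk a).
Definition idr (u : K) : tm := TId [:: Red u].
Definition cp (g f : tm) : tm := TComp g f.
Definition tn (f g : tm) : tm := TTens f g.
Definition Mg (a b : nat) : tm :=
  if (a == 0%N) || (b == 0%N) then idb (a + b) else TMerge a b.
Definition Sp (a b : nat) : tm :=
  if (a == 0%N) || (b == 0%N) then idb (a + b) else TSplit a b.
Definition Xc (a b : nat) : tm :=
  if (a == 0%N) || (b == 0%N) then idb (a + b) else TCross a b.
Definition dot (a : nat) : tm := if a is 0 then TId [::] else TDot a.
Definition Up (a : nat) (u : K) : tm := if a is 0 then idr u else TUp a u.
Definition Dn (u : K) (a : nat) : tm := if a is 0 then idr u else TDown u a.

Definition omega (a r : nat) : tm :=
  if r == 0%N then idb a
  else if (a < r)%N then TZero (blk a) (blk a)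
  else cp (Mg r (a - r)) (cp (tn (dot r) (idb (a - r))) (Sp r (a - r))).

Fixpoint Sn (a : nat) : tm :=
  if a is a'.+1 then cp (tn (idb 1) (Sn a')) (Sp 1 a') else TId [::].
Fixpoint Mn (a : nat) : tm :=
  if a is a'.+1 then cp (Mg 1 a') (tn (idb 1) (Mn a')) else TId [::].
Fixpoint dots1 (a : nat) : tm :=
  if a is a'.+1 then tn (dot 1) (dots1 a') else TId [::].

Definition tsum (x y : obj) (l : seq tm) : tm := foldr TAdd (TZero x y) l.

Definition gpol (r : nat) (u : K) : tm :=
  tsum (blk r) (blk r)
    [seq TScale ((-1) ^+ i * \prod_(j < i) (u + j%:R))%R (omega r (r - i))
    | i <- iota 0 r.+1].

Definition nK (n : nat) : K := n%:R.

Inductive ASax : tm -> tm -> Prop :=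
| ax_cpA f g h : ASax (cp (cp h g) f) (cp h (cp g f))
| ax_cp1r f : ASax (cp f (TId (src f))) f
| ax_cp1l f : ASax (cp (TId (tgt f)) f) f
| ax_tnA f g h : ASax (tn (tn f g) h) (tn f (tn g h))
| ax_tn1l f : ASax (tn (TId [::]) f) f
| ax_tn1r f : ASax (tn f (TId [::])) f
| ax_tnId x y : ASax (tn (TId x) (TId y)) (TId (x ++ y))
| ax_interchange f g f' g' :
    ASax (cp (tn f g) (tn f' g')) (tn (cp f f') (cp g g'))
| ax_addA f g h : ASax (TAdd (TAdd f g) h) (TAdd f (TAdd g h))
| ax_addC f g : ASax (TAdd f g) (TAdd g f)
| ax_add0 f : ASax (TAdd f (TZero (src f) (tgt f))) f
| ax_addN f : ASax (TAdd f (TScale (-1)%R f)) (TZero (src f) (tgt f))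
| ax_scale1 f : ASax (TScale 1%R f) f
| ax_scaleA c d f : ASax (TScale c (TScale d f)) (TScale (c * d)%R f)
| ax_scaleDl c d f : ASax (TScale (c + d)%R f) (TAdd (TScale c f) (TScale d f))
| ax_scaleDr c f g : ASax (TScale c (TAdd f g)) (TAdd (TScale c f) (TScale c g))
| ax_cpDl g g' f : ASax (cp (TAdd g g') f) (TAdd (cp g f) (cp g' f))
| ax_cpDr g f f' : ASax (cp g (TAdd f f')) (TAdd (cp g f) (cp g f'))
| ax_cpZl c g f : ASax (cp (TScale c g) f) (TScale c (cp g f))
| ax_cpZr c g f : ASax (cp g (TScale c f)) (TScale c (cp g f))
| ax_cp0l y z f : ASax (cp (TZero y z) f) (TZero (src f) z)
| ax_cp0r g x y : ASax (cp g (TZero x y)) (TZero x (tgt g))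
| ax_tnDl f f' g : ASax (tn (TAdd f f') g) (TAdd (tn f g) (tn f' g))
| ax_tnDr f g g' : ASax (tn f (TAdd g g')) (TAdd (tn f g) (tn f g'))
| ax_tnZl c f g : ASax (tn (TScale c f) g) (TScale c (tn f g))
| ax_tnZr c f g : ASax (tn f (TScale c g)) (TScale c (tn f g))
| ax_tn0l x y g : ASax (tn (TZero x y) g) (TZero (x ++ src g) (y ++ tgt g))
| ax_tn0r f x y : ASax (tn f (TZero x y)) (TZero (src f ++ x) (tgt f ++ y))
| ax_R1M a b c : (0 < a)%N -> (0 < b)%N -> (0 < c)%N ->
    ASax (cp (Mg (a + b) c) (tn (Mg a b) (idb c)))
         (cp (Mg a (b + c)) (tn (idb a) (Mg b c)))
| ax_R1S a b c : (0 < a)%N -> (0 < b)%N -> (0 < c)%N ->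
    ASax (cp (tn (Sp a b) (idb c)) (Sp (a + b) c))
         (cp (tn (idb a) (Sp b c)) (Sp a (b + c)))
| ax_R2 a b c d : (0 < a)%N -> (0 < b)%N -> (0 < c)%N -> (0 < d)%N ->
    (a + c = b + d)%N ->
    ASax (cp (Sp b d) (Mg a c))
      (tsum [:: Blk a; Blk c] [:: Blk b; Blk d]
        [seq cp (tn (Mg s (c - t)) (Mg (a - s) t))
             (cp (tn (tn (idb s) (Xc (a - s) (c - t))) (idb t))
                 (tn (Sp s (a - s)) (Sp (c - t) t)))
        | s <- iota 0 (minn a b).+1,
          t <- [seq t <- iota 0 (minn c d).+1 | t + a == s + d]])
| ax_R3 a b : (0 < a)%N -> (0 < b)%N ->
    ASax (cp (Mg a b) (Sp a b)) (TScale (nK 'C(a + b, a)) (idb (a + b)))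
| ax_R4l a b : (0 < a)%N -> (0 < b)%N ->
    ASax (cp (tn (dot b) (idb a)) (Xc a b))
      (tsum [:: Blk a; Blk b] [:: Blk b; Blk a]
        [seq TScale (nK t`!)
           (cp (tn (Mg t (b - t)) (Mg (a - t) t))
           (cp (tn (tn (idb t) (Xc (a - t) (b - t))) (idb t))
           (cp (tn (tn (tn (idb t) (idb (a - t))) (dot (b - t))) (idb t))
               (tn (Sp t (a - t)) (Sp (b - t) t)))))
        | t <- iota 0 (minn a b).+1])
| ax_R4r a b : (0 < a)%N -> (0 < b)%N ->
    ASax (cp (Xc b a) (tn (dot b) (idb a)))
      (tsum [:: Blk b; Blk a] [:: Blk a; Blk b]
        [seq TScale (nK t`!)
           (cp (tn (Mg t (a - t)) (Mg (b - t) t))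
           (cp (tn (tn (tn (idb t) (idb (a - t))) (dot (b - t))) (idb t))
           (cp (tn (tn (idb t) (Xc (b - t) (a - t))) (idb t))
               (tn (Sp t (b - t)) (Sp (a - t) t)))))
        | t <- iota 0 (minn a b).+1])
| ax_R5S a b : (0 < a)%N -> (0 < b)%N ->
    ASax (cp (Sp a b) (dot (a + b))) (cp (tn (dot a) (dot b)) (Sp a b))
| ax_R5M a b : (0 < a)%N -> (0 < b)%N ->
    ASax (cp (dot (a + b)) (Mg a b)) (cp (Mg a b) (tn (dot a) (dot b)))
| ax_R6 a : (0 < a)%N ->
    ASax (cp (Mn a) (cp (dots1 a) (Sn a))) (TScale (nK a`!) (dot a))
| ax_R7DU r u : (0 < r)%N ->
    ASax (cp (Dn u r) (Up r u)) (tn (gpol r u) (idr u))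
| ax_R7UD r u : (0 < r)%N ->
    ASax (cp (Up r u) (Dn u r)) (tn (idr u) (gpol r u))
| ax_R8 a b u : (0 < a)%N -> (0 < b)%N ->
    ASax (cp (tn (Dn u b) (idb a)) (cp (tn (idr u) (Xc a b)) (tn (Up a u) (idb b))))
      (TAdd
        (cp (tn (idb b) (Up a u)) (cp (tn (Xc a b) (idr u)) (tn (idb a) (Dn u b))))
        (tsum [:: Blk a; Red u; Blk b] [:: Blk b; Red u; Blk a]
          [seq TScale (nK t`!)
             (cp (tn (tn (Mg t (b - t)) (idr u)) (Mg (a - t) t))
             (cp (tn (tn (tn (idb t) (idb (b - t))) (Up (a - t) u)) (idb t))
             (cp (tn (tn (tn (idb t) (Xc (a - t) (b - t))) (idr u)) (idb t))
             (cp (tn (tn (tn (idb t) (idb (a - t))) (Dn u (b - t))) (idb t))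
                 (tn (tn (Sp t (a - t)) (idr u)) (Sp (b - t) t))))))
          | t <- iota 1 (minn a b)]))
| ax_R9a b c u : (0 < b)%N -> (0 < c)%N ->
    ASax (cp (tn (idr u) (Sp b c)) (Up (b + c) u))
         (cp (tn (Up b u) (idb c)) (cp (tn (idb b) (Up c u)) (tn (Sp b c) (idr u))))
| ax_R9b a b u : (0 < a)%N -> (0 < b)%N ->
    ASax (cp (tn (Sp a b) (idr u)) (Dn u (a + b)))
         (cp (tn (idb a) (Dn u b)) (cp (tn (Dn u a) (idb b)) (tn (idr u) (Sp a b))))
| ax_R9c b c u : (0 < b)%N -> (0 < c)%N ->
    ASax (cp (Dn u (b + c)) (tn (idr u) (Mg b c)))
         (cp (tn (Mg b c) (idr u)) (cp (tn (idb b) (Dn u c)) (tn (Dn u b) (idb c))))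
| ax_R9d a b u : (0 < a)%N -> (0 < b)%N ->
    ASax (cp (Up (a + b) u) (tn (Mg a b) (idr u)))
         (cp (tn (idr u) (Mg a b)) (cp (tn (Up a u) (idb b)) (tn (idb a) (Up b u)))).

Inductive ASeq : tm -> tm -> Prop :=
| eq_ax f g : ASax f g -> wt f -> wt g -> src f = src g -> tgt f = tgt g ->
    ASeq f g
| eq_refl f : wt f -> ASeq f f
| eq_sym f g : ASeq f g -> ASeq g f
| eq_trans f g h : ASeq f g -> ASeq g h -> ASeq f h
| eq_cp g g' f f' : ASeq g g' -> ASeq f f' -> tgt f = src g ->
    ASeq (cp g f) (cp g' f')
| eq_tn f f' g g' : ASeq f f' -> ASeq g g' -> ASeq (tn f g) (tn f' g')
| eq_add f f' g g' : ASeq f f' -> ASeq g g' -> src f = src g -> tgt f = tgt g ->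
    ASeq (TAdd f g) (TAdd f' g')
| eq_scale c f f' : ASeq f f' -> ASeq (TScale c f) (TScale c f').

End AffineSchur.

From Pilot Require Import Defs.
From mathcomp Require Import all_boot all_algebra zify.
Set Implicit Arguments. Unset Strict Implicit. Unset Printing Implicit Defensive.
Import GRing.Theory.

(* Strong induction on the thickness a.  For 0 < r < a we have
   omega_{a,r} = M_{r,a-r} (omega_r (x) 1) S_{r,a-r}, and the relations (R9)
   carry a traverse U_{a,u} or D_{u,a} through the merge and the split, so
   commuting with omega_{a,r} reduces to commuting with the thinner dot
   omega_r.  For the dot omega_a = omega_{a,a} itself, (R7) factors
   g_a(u) (x) 1_u as D U and 1_u (x) g_a(u) as U D, whence
   U (g_a(u) (x) 1_u) = U D U = (1_u (x) g_a(u)) U, and dually for D.  As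
   g_a(u) = omega_a + sum_{i >= 1} c_i omega_{a,a-i} and the lower terms
   commute by induction, they cancel and omega_a commutes too. *)

(* The constructors [eq_refl] and [eq_sym] of [ASeq] are shadowed by the
   eqtype lemmas of the same names. *)
Notation ASeq_refl := Defs.eq_refl.
Notation ASeq_sym := Defs.eq_sym.
Notation ASeq_trans := Defs.eq_trans.

Section Typing.
Variable K : comPzRingType.
Implicit Types (f g : tm K) (x y : obj K).

Lemma valid_cat x y : valid (x ++ y) = valid x && valid y.
Proof. exact: all_cat. Qed.

Lemma valid_blk a : 0 < a -> valid [:: Blk K a].
Proof. by rewrite /valid /= => ->. Qed.

Lemma wt_valid f : wt f -> valid (src f) /\ valid (tgt f).
Proof.
elim: f => //=.
- by move=> g IHg f IHf [/IHg [? ?] /IHf [? ?] ?].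
- by move=> f IHf g IHg [/IHf [? ?] /IHg [? ?]]; rewrite !valid_cat; split; apply/andP.
- by move=> f IHf g IHg [/IHf [? ?] /IHg [? ?]].
- by move=> a b [h1 h2]; rewrite h1 h2 addn_gt0 h1.
- by move=> a b [h1 h2]; rewrite h1 h2 addn_gt0 h1.
- by move=> a b [h1 h2]; rewrite h1 h2.
- by move=> a ->.
- by move=> a u ->.
- by move=> u a ->.
Qed.

Lemma ASeq_wt f g : ASeq f g -> [/\ wt f, wt g, src f = src g & tgt f = tgt g].
Proof.
elim=> {f g}.
- by move=> f g _ *.
- by [].
- by move=> f g _ [].
- by move=> f g h _ [? ? ? ?] _ [? ? ? ?]; split=> //; congruence.
- by move=> g g' f f' _ [? ? ? ?] _ [? ? ? ?] ?; split=> //=; split=> //; congruence.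
- by move=> f f' g g' _ [? ? ? ?] _ [? ? ? ?]; split=> //=; congruence.
- by move=> f f' g g' _ [? ? ? ?] _ [? ? ? ?] ? ?; split=> //=; split=> //; congruence.
- by move=> c f f' _ [].
Qed.
End Typing.

Ltac typing :=
  rewrite /=; try autorewrite with src_tgt; rewrite /=;
  repeat match goal with
  | H : src ?f = _ |- context [src ?f] => is_var f; rewrite H
  | H : tgt ?f = _ |- context [tgt ?f] => is_var f; rewrite H
  end;
  repeat match goal with
  | |- _ /\ _ => split | |- and3 _ _ _ => split | |- and4 _ _ _ _ => split end;
  try solve [auto];
  try match goal with
  | H : wt ?f |- is_true (valid (src ?f)) => exact: (wt_valid H).1
  | H : wt ?f |- is_true (valid (tgt ?f)) => exact: (wt_valid H).2
  end;
  try solve [rewrite !catA; done];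
  try congruence; try lia; try solve [repeat f_equal; lia].

Ltac by_axiom ax := apply: eq_ax; [exact: ax | typing..].

Section CategoryRules.
Variable K : comPzRingType.
Implicit Types (f g h : tm K) (x y z : obj K).

Lemma cp1r f : wt f -> ASeq (cp f (TId (src f))) f.
Proof. by move=> *; by_axiom (@ax_cp1r K). Qed.
Lemma cp1l f : wt f -> ASeq (cp (TId (tgt f)) f) f.
Proof. by move=> *; by_axiom (@ax_cp1l K). Qed.
Lemma cpA f g h : wt f -> wt g -> wt h -> tgt f = src g -> tgt g = src h ->
  ASeq (cp (cp h g) f) (cp h (cp g f)).
Proof. by move=> *; by_axiom (@ax_cpA K). Qed.
Lemma tnA f g h : wt f -> wt g -> wt h -> ASeq (tn (tn f g) h) (tn f (tn g h)).
Proof. by move=> *; by_axiom (@ax_tnA K); rewrite catA. Qed.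
Lemma tn1r f : wt f -> ASeq (tn f (TId [::])) f.
Proof. by move=> *; by_axiom (@ax_tn1r K); rewrite cats0. Qed.
Lemma tnId x y : valid x -> valid y -> ASeq (tn (TId x) (TId y)) (TId (x ++ y)).
Proof. by move=> *; by_axiom (@ax_tnId K); rewrite valid_cat; apply/andP. Qed.
Lemma interchange f g f' g' : wt f -> wt g -> wt f' -> wt g' ->
  tgt f' = src f -> tgt g' = src g ->
  ASeq (cp (tn f g) (tn f' g')) (tn (cp f f') (cp g g')).
Proof. by move=> *; by_axiom (@ax_interchange K). Qed.

Lemma taddA f g h : wt f -> wt g -> wt h -> src f = src g -> src g = src h ->
  tgt f = tgt g -> tgt g = tgt h -> ASeq (TAdd (TAdd f g) h) (TAdd f (TAdd g h)).
Proof. by move=> *; by_axiom (@ax_addA K). Qed.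
Lemma tadd0 f : wt f -> ASeq (TAdd f (TZero (src f) (tgt f))) f.
Proof. by move=> *; by_axiom (@ax_add0 K). Qed.
Lemma taddN f : wt f -> ASeq (TAdd f (TScale (-1)%R f)) (TZero (src f) (tgt f)).
Proof. by move=> *; by_axiom (@ax_addN K). Qed.
Lemma tscale1 f : wt f -> ASeq (TScale 1%R f) f.
Proof. by move=> *; by_axiom (@ax_scale1 K). Qed.

Lemma cpDl g g' f : wt g -> wt g' -> wt f -> src g = src g' -> tgt g = tgt g' ->
  tgt f = src g -> ASeq (cp (TAdd g g') f) (TAdd (cp g f) (cp g' f)).
Proof. by move=> *; by_axiom (@ax_cpDl K). Qed.
Lemma cpDr g f f' : wt g -> wt f -> wt f' -> src f = src f' -> tgt f = tgt f' ->
  tgt f = src g -> ASeq (cp g (TAdd f f')) (TAdd (cp g f) (cp g f')).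
Proof. by move=> *; by_axiom (@ax_cpDr K). Qed.
Lemma cpZl c g f : wt g -> wt f -> tgt f = src g ->
  ASeq (cp (TScale c g) f) (TScale c (cp g f)).
Proof. by move=> *; by_axiom (@ax_cpZl K). Qed.
Lemma cpZr c g f : wt g -> wt f -> tgt f = src g ->
  ASeq (cp g (TScale c f)) (TScale c (cp g f)).
Proof. by move=> *; by_axiom (@ax_cpZr K). Qed.
Lemma cp0l y z f : wt f -> valid z -> tgt f = y ->
  ASeq (cp (TZero y z) f) (TZero (src f) z).
Proof. by move=> w *; by_axiom (@ax_cp0l K); subst; exact: (wt_valid w).2. Qed.
Lemma cp0r x y g : wt g -> valid x -> y = src g ->
  ASeq (cp g (TZero x y)) (TZero x (tgt g)).
Proof. by move=> w *; by_axiom (@ax_cp0r K); subst; exact: (wt_valid w).1. Qed.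

Lemma tnDl f f' g : wt f -> wt f' -> wt g -> src f = src f' -> tgt f = tgt f' ->
  ASeq (tn (TAdd f f') g) (TAdd (tn f g) (tn f' g)).
Proof. by move=> *; by_axiom (@ax_tnDl K). Qed.
Lemma tnDr f g g' : wt f -> wt g -> wt g' -> src g = src g' -> tgt g = tgt g' ->
  ASeq (tn f (TAdd g g')) (TAdd (tn f g) (tn f g')).
Proof. by move=> *; by_axiom (@ax_tnDr K). Qed.
Lemma tnZl c f g : wt f -> wt g -> ASeq (tn (TScale c f) g) (TScale c (tn f g)).
Proof. by move=> *; by_axiom (@ax_tnZl K). Qed.
Lemma tnZr c f g : wt f -> wt g -> ASeq (tn f (TScale c g)) (TScale c (tn f g)).
Proof. by move=> *; by_axiom (@ax_tnZr K). Qed.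
Lemma tn0l x y g : wt g -> valid x -> valid y ->
  ASeq (tn (TZero x y) g) (TZero (x ++ src g) (y ++ tgt g)).
Proof. by move=> w *; by_axiom (@ax_tn0l K); rewrite valid_cat; apply/andP; split=> //; typing. Qed.
Lemma tn0r f x y : wt f -> valid x -> valid y ->
  ASeq (tn f (TZero x y)) (TZero (src f ++ x) (tgt f ++ y)).
Proof. by move=> w *; by_axiom (@ax_tn0r K); rewrite valid_cat; apply/andP; split=> //; typing. Qed.

Lemma eq_cpl g g' f : ASeq g g' -> wt f -> tgt f = src g -> ASeq (cp g f) (cp g' f).
Proof. by move=> e w t; apply: eq_cp => //; apply: ASeq_refl. Qed.
Lemma eq_cpr g f f' : ASeq f f' -> wt g -> tgt f = src g -> ASeq (cp g f) (cp g f').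
Proof. by move=> e w t; apply: eq_cp => //; apply: ASeq_refl. Qed.
Lemma eq_tnl f f' g : ASeq f f' -> wt g -> ASeq (tn f g) (tn f' g).
Proof. by move=> e w; apply: eq_tn => //; apply: ASeq_refl. Qed.
Lemma eq_tnr f g g' : ASeq g g' -> wt f -> ASeq (tn f g) (tn f g').
Proof. by move=> e w; apply: eq_tn => //; apply: ASeq_refl. Qed.

Lemma tadd_cancel f g f' g' : wt f -> wt g -> wt f' -> wt g' ->
  src f = src g -> tgt f = tgt g -> src f' = src g' -> tgt f' = tgt g' ->
  ASeq (TAdd f g) (TAdd f' g') -> ASeq g g' -> ASeq f f'.
Proof.
move=> wf wg wf' wg' sfg tfg sfg' tfg' e eg.
have [_ _ sgg' tgg'] := ASeq_wt eg.
apply: ASeq_trans (ASeq_sym (tadd0 wf)) _.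
apply: ASeq_trans.
  apply: eq_add; [exact: ASeq_refl | | by [] | by []].
  by apply: ASeq_sym; rewrite sfg tfg; apply: taddN.
apply: ASeq_trans; first by apply: ASeq_sym; apply: taddA; typing.
apply: ASeq_trans.
  by apply: eq_add; [exact: e | apply: eq_scale; exact: eg | typing | typing].
apply: ASeq_trans; first by apply: taddA; typing.
apply: ASeq_trans.
  by apply: eq_add; [exact: ASeq_refl | apply: taddN | by [] | by []].
by rewrite -sfg' -tfg'; apply: tadd0.
Qed.
End CategoryRules.

Section Whiskering.
Variables (K : comPzRingType) (u : K).
Implicit Types (f g : tm K) (x y : obj K).

Definition wobj (right : bool) x : obj K := if right then x ++ [:: Red u] else Red u :: x.
Definition whisk (right : bool) f : tm K := if right then tn f (idr u) else tn (idr u) f.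

Lemma whisk_wt s f : wt f -> wt (whisk s f). Proof. by case: s. Qed.
Lemma whisk_src s f : src (whisk s f) = wobj s (src f). Proof. by case: s. Qed.
Lemma whisk_tgt s f : tgt (whisk s f) = wobj s (tgt f). Proof. by case: s. Qed.
End Whiskering.

#[global] Hint Resolve whisk_wt : core.
#[global] Hint Rewrite whisk_src whisk_tgt : src_tgt.

Section WhiskeringRules.
Variables (K : comPzRingType) (u : K).
Implicit Types (f g : tm K) (x y : obj K).
Notation whisk := (whisk u).
Notation wobj := (wobj u).

Lemma whisk_cong s f f' : ASeq f f' -> ASeq (whisk s f) (whisk s f').
Proof. by move=> e; case: s; [apply: eq_tnl | apply: eq_tnr]. Qed.

Lemma whisk_cp s f g : wt f -> wt g -> tgt f = src g ->
  ASeq (whisk s (cp g f)) (cp (whisk s g) (whisk s f)).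
Proof.
have idr2 : ASeq (cp (idr u) (idr u)) (idr u) by exact: (@cp1r K (idr u)).
move=> wf wg e; case: s => /=; apply: ASeq_trans.
- by apply: eq_tnr (ASeq_sym idr2) _; typing.
- by apply: ASeq_sym; apply: interchange; typing.
- by apply: eq_tnl (ASeq_sym idr2) _; typing.
- by apply: ASeq_sym; apply: interchange; typing.
Qed.

Lemma whisk_add s f g : wt f -> wt g -> src f = src g -> tgt f = tgt g ->
  ASeq (whisk s (TAdd f g)) (TAdd (whisk s f) (whisk s g)).
Proof. by move=> *; case: s => /=; [apply: tnDl | apply: tnDr]; typing. Qed.

Lemma whisk_scale s c f : wt f -> ASeq (whisk s (TScale c f)) (TScale c (whisk s f)).
Proof. by move=> *; case: s => /=; [apply: tnZl | apply: tnZr]. Qed.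

Lemma whisk_zero s x y : valid x -> valid y ->
  ASeq (whisk s (TZero x y)) (TZero (wobj s x) (wobj s y)).
Proof. by move=> vx vy; case: s; [apply: (@tn0l K x y (idr u)) | apply: (@tn0r K (idr u) x y)]. Qed.

Lemma whisk_id s x : valid x -> ASeq (whisk s (TId x)) (TId (wobj s x)).
Proof. by move=> vx; case: s; [apply: (@tnId K x [:: Red u]) | apply: (@tnId K [:: Red u] x)]. Qed.
End WhiskeringRules.

Section Commutation.
Variables (K : comPzRingType) (u : K).
Implicit Types (f g : tm K) (x : obj K).

Definition endo x f := [/\ wt f, src f = x & tgt f = x].

Definition commutes (X : tm K) (s t : bool) f :=
  ASeq (cp X (whisk u s f)) (cp (whisk u t f) X).

Lemma endo_tsum x (F : nat -> tm K) (r : seq nat) : valid x ->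
  (forall i, i \in r -> endo x (F i)) -> endo x (tsum x x [seq F i | i <- r]).
Proof.
move=> vx; elim: r => [|i r IH] endoF /=; first by split.
have [wi si ti] := endoF i (mem_head i r).
have [wr sr tr] : endo x (tsum x x [seq F i | i <- r]).
  by apply: IH => j jr; apply: endoF; rewrite inE jr orbT.
by split=> //=; split=> //; congruence.
Qed.

Variables (X : tm K) (s t : bool) (x : obj K).
Hypotheses (vx : valid x) (wX : wt X) (sX : src X = wobj u s x) (tX : tgt X = wobj u t x).

Lemma commutes_cong f f' : ASeq f f' -> endo x f -> commutes X s t f -> commutes X s t f'.
Proof.
move=> e [wf sf tf] c; have [_ wf' sf' tf'] := ASeq_wt e.
apply: ASeq_trans; first by apply: eq_cpr (ASeq_sym (whisk_cong u s e)) _ _; typing.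
apply: ASeq_trans c _.
by apply: eq_cpl (whisk_cong u t e) _ _; typing.
Qed.

Lemma commutes_of_factor (Y : tm K) g : endo x g ->
  ASeq (cp Y X) (whisk u s g) -> ASeq (cp X Y) (whisk u t g) -> commutes X s t g.
Proof.
move=> [wg sg tg] eYX eXY.
have [[wY _ tXY] _ _ _] := ASeq_wt eYX; have [[_ _ tYX] _ _ _] := ASeq_wt eXY.
apply: ASeq_trans; first by apply: eq_cpr (ASeq_sym eYX) _ _; typing.
apply: ASeq_trans; first by apply: ASeq_sym; apply: cpA; typing.
by apply: eq_cpl eXY _ _; typing.
Qed.

Lemma commutes_id : commutes X s t (TId x).
Proof.
apply: ASeq_trans; first by apply: eq_cpr (whisk_id u s vx) _ _; typing.
apply: ASeq_trans; first by rewrite -sX; apply: cp1r.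
apply: ASeq_trans; first by apply: ASeq_sym; apply: cp1l.
by rewrite tX; apply: eq_cpl (ASeq_sym (whisk_id u t vx)) _ _; typing.
Qed.

Lemma commutes_add f g : endo x f -> endo x g ->
  commutes X s t f -> commutes X s t g -> commutes X s t (TAdd f g).
Proof.
move=> [wf sf tf] [wg sg tg] cf cg.
apply: ASeq_trans; first by apply: eq_cpr (whisk_add u s wf wg _ _) _ _; typing.
apply: ASeq_trans; first by apply: cpDr; typing.
apply: ASeq_trans; first by apply: eq_add cf cg _ _; typing.
apply: ASeq_trans; first by apply: ASeq_sym; apply: cpDl; typing.
by apply: eq_cpl (ASeq_sym (whisk_add u t wf wg _ _)) _ _; typing.
Qed.

Lemma commutes_scale c f : endo x f -> commutes X s t f -> commutes X s t (TScale c f).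
Proof.
move=> [wf sf tf] cf.
apply: ASeq_trans; first by apply: eq_cpr (whisk_scale u s c wf) _ _; typing.
apply: ASeq_trans; first by apply: cpZr; typing.
apply: ASeq_trans; first exact: eq_scale cf.
apply: ASeq_trans; first by apply: ASeq_sym; apply: cpZl; typing.
by apply: eq_cpl (ASeq_sym (whisk_scale u t c wf)) _ _; typing.
Qed.

Lemma commutes_zero : commutes X s t (TZero x x).
Proof.
have vw r : valid (wobj u r x) by case: r; rewrite /= ?valid_cat vx.
apply: ASeq_trans; first by apply: eq_cpr (whisk_zero u s vx vx) _ _; typing.
apply: ASeq_trans; first by apply: cp0r; typing.
apply: ASeq_sym; apply: ASeq_trans; first by apply: eq_cpl (whisk_zero u t vx vx) _ _; typing.
by apply: ASeq_trans; [apply: cp0l; typing | rewrite sX tX; apply: ASeq_refl].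
Qed.

Lemma commutes_tsum (F : nat -> tm K) (r : seq nat) :
  (forall i, i \in r -> endo x (F i) /\ commutes X s t (F i)) ->
  commutes X s t (tsum x x [seq F i | i <- r]).
Proof.
elim: r => [|i r IH] hF /=; first exact: commutes_zero.
have hFr j : j \in r -> endo x (F j) /\ commutes X s t (F j).
  by move=> jr; apply: hF; rewrite inE jr orbT.
have [ei ci] := hF i (mem_head i r).
apply: commutes_add => //; last exact: IH.
by apply: endo_tsum => // j /hFr [].
Qed.

Lemma commutes_cancel f g : endo x f -> endo x g ->
  commutes X s t (TAdd f g) -> commutes X s t g -> commutes X s t f.
Proof.
move=> [wf sf tf] [wg sg tg] cfg cg; have [_ _ sg' tg'] := ASeq_wt cg.
apply: (@tadd_cancel _ _ (cp X (whisk u s g)) _ (cp (whisk u t g) X)); try by typing.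
apply: ASeq_trans; first by apply: ASeq_sym; apply: cpDr; typing.
apply: ASeq_trans; first by apply: eq_cpr (ASeq_sym (whisk_add u s wf wg _ _)) _ _; typing.
apply: ASeq_trans cfg _.
apply: ASeq_trans; first by apply: eq_cpl (whisk_add u t wf wg _ _) _ _; typing.
by apply: cpDl; typing.
Qed.
End Commutation.

Section Chains.
Variable K : comPzRingType.
Implicit Types (f g h : tm K) (l m : seq (tm K)).

(* Right-nested composites f o g_1 o ... o g_n, so that a relation can be
   applied to any block of consecutive factors ([comps_infix]) without
   reassociating by hand. *)
Fixpoint comps f l : tm K := if l is g :: l' then cp f (comps g l') else f.
Fixpoint chain f l : Prop :=
  if l is g :: l' then [/\ wt f, tgt g = src f & chain g l'] else wt f.

Lemma comps_tgt f l : tgt (comps f l) = tgt f.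
Proof. by case: l. Qed.

Lemma comps_src f l : src (comps f l) = src (last f l).
Proof. by elim: l f => //= g l IH f; rewrite IH. Qed.

Lemma comps_wt f l : chain f l -> wt (comps f l).
Proof. by elim: l f => //= g l IH f [wf e c]; split=> //; [apply: IH | rewrite comps_tgt]. Qed.

Lemma chain_cat h l g m :
  chain h (l ++ g :: m) <-> [/\ chain h l, chain g m & tgt g = src (last h l)].
Proof.
elim: l h => [|k l IH] h /=; first by split=> [[]|[]].
by split=> [[w e /IH [c1 c2 e2]] | [[w e c1] c2 e2]]; split=> //; apply/IH.
Qed.

Lemma comps_cat h l g m : chain h (l ++ g :: m) ->
  ASeq (comps h (l ++ g :: m)) (cp (comps h l) (comps g m)).
Proof.
elim: l h => [|k l IH] h /=; first by move=> c; apply: ASeq_refl; apply: (comps_wt (l := g :: m)).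
move=> [w e c]; have [c1 c2 e2] := (chain_cat k l g m).1 c.
apply: ASeq_trans; first by apply: eq_cpr (IH _ c) _ _; rewrite ?comps_tgt.
by apply: ASeq_sym; apply: cpA; rewrite ?comps_tgt ?comps_src //; apply: comps_wt.
Qed.

Lemma comps_prefix f l f' l' m : ASeq (comps f l) (comps f' l') ->
  chain f (l ++ m) -> chain f' (l' ++ m) -> ASeq (comps f (l ++ m)) (comps f' (l' ++ m)).
Proof.
case: m => [|g m] e c c'; first by rewrite !cats0.
have [c1 c2 e1] := (chain_cat f l g m).1 c; have [c1' _ e1'] := (chain_cat f' l' g m).1 c'.
apply: ASeq_trans (comps_cat c) _; apply: ASeq_trans (ASeq_sym (comps_cat c')).
by apply: eq_cp => //; [apply: ASeq_refl; apply: comps_wt | rewrite comps_tgt comps_src].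
Qed.

Lemma comps_infix h p f l f' l' m : ASeq (comps f l) (comps f' l') ->
  chain h (p ++ f :: l ++ m) -> chain f' (l' ++ m) ->
  ASeq (comps h (p ++ f :: l ++ m)) (comps h (p ++ f' :: l' ++ m)).
Proof.
move=> e; have [_ _ es _] := ASeq_wt e.
elim: p h => [|g p IH] h /= [w eh c] c'; apply: eq_cpr => //; rewrite ?comps_tgt //.
- exact: comps_prefix.
- exact: IH.
Qed.
End Chains.

#[global] Hint Rewrite comps_src comps_tgt : src_tgt.

Lemma whisk_comps (K : comPzRingType) (u : K) s (h : tm K) l : chain h l ->
  ASeq (whisk u s (comps h l)) (comps (whisk u s h) [seq whisk u s g | g <- l]).
Proof.
elim: l h => [|g l IH] h /=; first by move=> w; apply: ASeq_refl; apply: whisk_wt.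
move=> [w e c]; apply: ASeq_trans; first by apply: whisk_cp; typing; apply: comps_wt.
by apply: eq_cpr (IH _ c) _ _; typing.
Qed.

Section Interchange.
Variable K : comPzRingType.
Implicit Types (f g a b c d : tm K) (y z : obj K).

Lemma slide f g : wt f -> wt g ->
  ASeq (cp (tn (TId (tgt f)) g) (tn f (TId (src g))))
       (cp (tn f (TId (tgt g))) (tn (TId (src f)) g)).
Proof.
move=> wf wg; have [vsf vtf] := wt_valid wf; have [vsg vtg] := wt_valid wg.
apply: ASeq_trans; first by apply: interchange; typing.
apply: ASeq_trans; first by apply: eq_tn; [apply: cp1l | apply: cp1r].
apply: ASeq_sym; apply: ASeq_trans; first by apply: interchange; typing.
by apply: eq_tn; [apply: cp1r | apply: cp1l].
Qed.

Lemma slide_tn f g y z y' z' : wt f -> wt g -> src g = y ++ z -> tgt g = y' ++ z' ->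
  ASeq (cp (tn (TId (tgt f)) g) (tn (tn f (TId y)) (TId z)))
       (cp (tn (tn f (TId y')) (TId z')) (tn (TId (src f)) g)).
Proof.
move=> wf wg sg tg; have [vs vt] := wt_valid wg.
move: vs vt; rewrite sg tg !valid_cat => /andP[vy vz] /andP[vy' vz'].
have tn_split y1 z1 : valid y1 -> valid z1 ->
    ASeq (tn (tn f (TId y1)) (TId z1)) (tn f (TId (y1 ++ z1))).
  by move=> v1 v2; apply: ASeq_trans (tnA _ _ _) _ => //; apply: eq_tnr (tnId v1 v2) _.
apply: ASeq_trans; first by apply: eq_cpr (tn_split _ _ vy vz) _ _; typing.
rewrite -sg; apply: ASeq_trans (slide wf wg) _.
by rewrite tg; apply: eq_cpl (ASeq_sym (tn_split _ _ vy' vz')) _ _; typing.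
Qed.

Lemma eq_cp_tn1r a b c d y : valid y -> ASeq (cp a b) (cp c d) ->
  ASeq (cp (tn a (TId y)) (tn b (TId y))) (cp (tn c (TId y)) (tn d (TId y))).
Proof.
move=> vy e; have [[wa wb eab] [wc wd ecd] _ _] := ASeq_wt e.
have idy : ASeq (cp (TId y) (TId y)) (TId y) by apply: (@cp1r K (TId y)).
apply: ASeq_trans; first by apply: interchange; typing.
apply: ASeq_trans; first exact: eq_tn e idy.
apply: ASeq_sym; apply: ASeq_trans; first by apply: interchange; typing.
exact: eq_tnr idy _.
Qed.
End Interchange.

Section Dots.
Variable K : comPzRingType.
Notation I b := (TId [:: Blk K b]).

Lemma omega0 a : 0 < a -> omega K a 0 = I a.
Proof. by case: a. Qed.

Lemma omega_lt a r : 0 < r < a -> omega K a r =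
  cp (TMerge K r (a - r)) (cp (tn (TDot K r) (I (a - r))) (TSplit K r (a - r))).
Proof.
case: r => // r /= ra; rewrite /omega /= ltnNge ltnW //= /Mg /Sp /idb.
by case E: (a - r.+1) => [|k]; first lia.
Qed.

Lemma omega_top a : 0 < a -> ASeq (omega K a a) (TDot K a).
Proof.
case: a => // a _; rewrite /omega /= ltnn subnn /Mg /Sp !orbT /=.
have wD : wt (cp (tn (TDot K a.+1) (TId [::])) (I a.+1)) by typing.
apply: ASeq_trans; first by rewrite addn0; apply: (cp1l wD).
apply: ASeq_trans; first by apply: eq_cpl (tn1r _) _ _.
exact: (@cp1r K (TDot K a.+1)).
Qed.

Lemma endo_dot a : 0 < a -> endo [:: Blk K a] (TDot K a).
Proof. by []. Qed.

Lemma endo_omega a r : 0 < a -> endo [:: Blk K a] (omega K a r).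
Proof.
move=> a0; case: (ltngtP r a) => [ra | ar | ->].
- case: r ra => [|r] ra; first by rewrite omega0 //; split=> //; apply: valid_blk.
  by rewrite omega_lt // /endo; typing.
- have r0 : (r == 0) = false by lia.
  by rewrite /omega r0 ar; case: a a0 {ar}.
- by have [w _ s t] := ASeq_wt (omega_top a0); split.
Qed.

Definition gcoef (u : K) (i : nat) : K := ((-1) ^+ i * \prod_(j < i) (u + j%:R))%R.

Lemma gpolE a u : 0 < a -> gpol a u = TAdd (TScale 1%R (omega K a a))
  (tsum [:: Blk K a] [:: Blk K a] [seq TScale (gcoef u i) (omega K a (a - i)) | i <- iota 1 a]).
Proof. by case: a => // a _; rewrite /gpol /= subn0 expr0 big_ord0 mulr1. Qed.

Lemma endo_gpol a u : 0 < a -> endo [:: Blk K a] (gpol a u).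
Proof.
move=> a0; rewrite /gpol (_ : blk K a = [:: Blk K a]); last by case: a a0.
apply: endo_tsum => [|i _]; first exact: valid_blk.
by have [] := endo_omega (a - i) a0.
Qed.
End Dots.

Section Traverses.
Variables (K : comPzRingType) (u : K).
Notation R := (idr u).
Notation I b := (TId [:: Blk K b]).

Lemma up_split b c : 0 < b -> 0 < c ->
  ASeq (cp (tn R (TSplit K b c)) (TUp (b + c) u))
       (cp (tn (TUp b u) (I c)) (cp (tn (I b) (TUp c u)) (tn (TSplit K b c) R))).
Proof. by case: b => // b; case: c => // c _ _; by_axiom (@ax_R9a K b.+1 c.+1 u). Qed.

Lemma down_split a b : 0 < a -> 0 < b ->
  ASeq (cp (tn (TSplit K a b) R) (TDown u (a + b)))
       (cp (tn (I a) (TDown u b)) (cp (tn (TDown u a) (I b)) (tn R (TSplit K a b)))).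
Proof. by case: a => // a; case: b => // b _ _; by_axiom (@ax_R9b K a.+1 b.+1 u). Qed.

Lemma down_merge b c : 0 < b -> 0 < c ->
  ASeq (cp (TDown u (b + c)) (tn R (TMerge K b c)))
       (cp (tn (TMerge K b c) R) (cp (tn (I b) (TDown u c)) (tn (TDown u b) (I c)))).
Proof. by case: b => // b; case: c => // c _ _; by_axiom (@ax_R9c K b.+1 c.+1 u). Qed.

Lemma up_merge a b : 0 < a -> 0 < b ->
  ASeq (cp (TUp (a + b) u) (tn (TMerge K a b) R))
       (cp (tn R (TMerge K a b)) (cp (tn (TUp a u) (I b)) (tn (I a) (TUp b u)))).
Proof. by case: a => // a; case: b => // b _ _; by_axiom (@ax_R9d K a.+1 b.+1 u). Qed.

(* [up] is also the side on which the red strand enters: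
   U_{a,u} : (a,u) -> (u,a) and D_{u,a} : (u,a) -> (a,u). *)
Definition trav (up : bool) (a : nat) : tm K := if up then TUp a u else TDown u a.

Definition trav_commutes up a f := commutes u (trav up a) up (~~ up) f.

Lemma trav_typed up a : 0 < a -> [/\ wt (trav up a),
  src (trav up a) = wobj u up [:: Blk K a] & tgt (trav up a) = wobj u (~~ up) [:: Blk K a]].
Proof. by case: up; case: a. Qed.

Lemma trav_gpol up a : 0 < a ->
  ASeq (cp (trav (~~ up) a) (trav up a)) (whisk u up (gpol a u)).
Proof.
case: a => // a _; have [w s t] := endo_gpol u (ltn0Sn a).
have ax : ASax (cp (trav (~~ up) a.+1) (trav up a.+1)) (whisk u up (gpol a.+1 u)).
  by case: up; [exact: (@ax_R7DU K a.+1 u) | exact: (@ax_R7UD K a.+1 u)].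
(* [gpol] is generalized away so that [typing] does not unfold it. *)
by apply: eq_ax ax _ _ _ _; case: up; move: (gpol a.+1 u) w s t => g w s t; typing.
Qed.

Lemma trav_commutes_gpol up a : 0 < a -> trav_commutes up a (gpol a u).
Proof.
move=> a0; have [wX sX _] := trav_typed up a0.
apply: (commutes_of_factor wX sX (endo_gpol u a0) (trav_gpol up a0)).
by have := trav_gpol (~~ up) a0; rewrite negbK.
Qed.
End Traverses.

Section MergeSplit.
Variables (K : comPzRingType) (u : K) (r s : nat) (f : tm K).
Hypotheses (r0 : 0 < r) (s0 : 0 < s) (endof : endo [:: Blk K r] f).
Notation R := (idr u).
Notation I b := (TId [:: Blk K b]).
Notation M := (TMerge K r s).
Notation S := (TSplit K r s).
Notation X := (tn f (I s)).
Notation Ur := (tn (TUp r u) (I s)).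
Notation Us := (tn (I r) (TUp s u)).
Notation Dr := (tn (TDown u r) (I s)).
Notation Ds := (tn (I r) (TDown u s)).
Notation fR_s := (tn (tn f R) (I s)).
Notation Rf_s := (tn (tn R f) (I s)).

Lemma up_commutes_merge_split :
  trav_commutes u true r f -> trav_commutes u true (r + s) (comps M [:: X; S]).
Proof.
case: endof => wf sf tf cf; rewrite /trav_commutes /commutes /=.
have chF : chain M [:: X; S] by typing.
have merge_R9 : ASeq (comps (TUp (r + s) u) [:: tn M R; tn X R; tn S R])
    (comps (tn R M) [:: Ur; Us; tn X R; tn S R]).
  apply: (comps_prefix (l := [:: _]) (l' := [:: _; _])); try typing.
  exact: (up_merge u r0 s0).
have slide_Us : ASeq (comps (tn R M) [:: Ur; Us; tn X R; tn S R])
    (comps (tn R M) [:: Ur; fR_s; Us; tn S R]).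
  apply: (comps_infix (p := [:: _]) (l := [:: _]) (l' := [:: _]) (m := [:: _])); try typing.
  have := @slide_tn K f (TUp s u) [:: Blk K s] [:: Red u] [:: Red u] [:: Blk K s].
  by rewrite sf tf; apply.
have pass_f : ASeq (comps (tn R M) [:: Ur; fR_s; Us; tn S R])
    (comps (tn R M) [:: Rf_s; Ur; Us; tn S R]).
  apply: (comps_infix (p := [::]) (l := [:: _]) (l' := [:: _]) (m := [:: _; _])); try typing.
  by apply: (eq_cp_tn1r _ cf); typing.
have split_R9 : ASeq (comps (tn R M) [:: Rf_s; Ur; Us; tn S R])
    (comps (tn R M) [:: Rf_s; tn R S; TUp (r + s) u]).
  apply: (comps_infix (p := [:: _]) (l := [:: _; _]) (l' := [:: _]) (m := [::])); try typing.
  exact: (ASeq_sym (up_split u r0 s0)).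
have reassoc : ASeq (comps (tn R M) [:: Rf_s; tn R S; TUp (r + s) u])
    (comps (tn R M) [:: tn R X; tn R S; TUp (r + s) u]).
  apply: (comps_infix (p := [::]) (l := [::]) (l' := [::]) (m := [:: _; _])); try typing.
  by apply: tnA; typing.
apply: ASeq_trans; first by apply: eq_cpr (whisk_comps u true chF) _ _; typing.
apply: ASeq_trans (ASeq_trans merge_R9 (ASeq_trans slide_Us
  (ASeq_trans pass_f (ASeq_trans split_R9 reassoc)))) _.
apply: ASeq_trans; first by apply: (comps_cat (l := [:: _; _]) (m := [::])); typing.
by apply: eq_cpl (ASeq_sym (whisk_comps u false chF)) _ _; typing.
Qed.

Lemma down_commutes_merge_split :
  trav_commutes u false r f -> trav_commutes u false (r + s) (comps M [:: X; S]).
Proof.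
case: endof => wf sf tf cf; rewrite /trav_commutes /commutes /=.
have chF : chain M [:: X; S] by typing.
have merge_R9 : ASeq (comps (TDown u (r + s)) [:: tn R M; tn R X; tn R S])
    (comps (tn M R) [:: Ds; Dr; tn R X; tn R S]).
  apply: (comps_prefix (l := [:: _]) (l' := [:: _; _])); try typing.
  exact: (down_merge u r0 s0).
have reassoc : ASeq (comps (tn M R) [:: Ds; Dr; tn R X; tn R S])
    (comps (tn M R) [:: Ds; Dr; Rf_s; tn R S]).
  apply: (comps_infix (p := [:: _; _]) (l := [::]) (l' := [::]) (m := [:: _])); try typing.
  by apply: ASeq_sym; apply: tnA; typing.
have pass_f : ASeq (comps (tn M R) [:: Ds; Dr; Rf_s; tn R S])
    (comps (tn M R) [:: Ds; fR_s; Dr; tn R S]).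
  apply: (comps_infix (p := [:: _]) (l := [:: _]) (l' := [:: _]) (m := [:: _])); try typing.
  by apply: (eq_cp_tn1r _ cf); typing.
have slide_Ds : ASeq (comps (tn M R) [:: Ds; fR_s; Dr; tn R S])
    (comps (tn M R) [:: tn X R; Ds; Dr; tn R S]).
  apply: (comps_infix (p := [::]) (l := [:: _]) (l' := [:: _]) (m := [:: _; _])); try typing.
  have := @slide_tn K f (TDown u s) [:: Red u] [:: Blk K s] [:: Blk K s] [:: Red u].
  by rewrite sf tf; apply.
have split_R9 : ASeq (comps (tn M R) [:: tn X R; Ds; Dr; tn R S])
    (comps (tn M R) [:: tn X R; tn S R; TDown u (r + s)]).
  apply: (comps_infix (p := [:: _]) (l := [:: _; _]) (l' := [:: _]) (m := [::])); try typing.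
  exact: (ASeq_sym (down_split u r0 s0)).
apply: ASeq_trans; first by apply: eq_cpr (whisk_comps u false chF) _ _; typing.
apply: ASeq_trans (ASeq_trans merge_R9 (ASeq_trans reassoc
  (ASeq_trans pass_f (ASeq_trans slide_Ds split_R9)))) _.
apply: ASeq_trans; first by apply: (comps_cat (l := [:: _; _]) (m := [::])); typing.
by apply: eq_cpl (ASeq_sym (whisk_comps u true chF)) _ _; typing.
Qed.

Lemma trav_commutes_merge_split up :
  trav_commutes u up r f -> trav_commutes u up (r + s) (comps M [:: X; S]).
Proof. by case: up; [apply: up_commutes_merge_split | apply: down_commutes_merge_split]. Qed.
End MergeSplit.

Section DotsCommute.
Variables (K : comPzRingType) (u : K).

Lemma trav_commutes_omega up a r : 0 < a -> r <= a ->
  (0 < r -> trav_commutes u up r (TDot K r)) -> trav_commutes u up a (omega K a r).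
Proof.
move=> a0 ra hdot; have [wX sX tX] := trav_typed u up a0.
case: (ltngtP r a) ra hdot => [ra _ hdot | // | -> _ hdot].
- case: r ra hdot => [|r] ra hdot.
    by rewrite omega0 //; exact: (commutes_id (valid_blk K a0) wX sX tX).
  rewrite omega_lt //.
  have s0 : 0 < a - r.+1 by lia.
  have := trav_commutes_merge_split (ltn0Sn r) s0 (endo_dot K (ltn0Sn r)) (hdot isT).
  by rewrite subnKC // ltnW.
- exact: (commutes_cong wX sX tX (ASeq_sym (omega_top K a0)) (endo_dot K a0) (hdot a0)).
Qed.

Lemma trav_commutes_dot up a : 0 < a -> trav_commutes u up a (TDot K a).
Proof.
elim/ltn_ind: a => a IH a0; have [wX sX tX] := trav_typed u up a0.
set lower := tsum [:: Blk K a] [:: Blk K a]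
  [seq TScale (gcoef u i) (omega K a (a - i)) | i <- iota 1 a].
have endo_top : endo [:: Blk K a] (TScale 1%R (omega K a a)) by have [] := endo_omega K a a0.
have endo_lower : endo [:: Blk K a] lower.
  by apply: endo_tsum => [|i _]; [exact: valid_blk | have [] := endo_omega K (a - i) a0].
have c_lower : trav_commutes u up a lower.
  apply: (commutes_tsum (valid_blk K a0) wX sX tX) => i; rewrite mem_iota => /andP[i1 _]; split.
    by have [] := endo_omega K (a - i) a0.
  apply: (commutes_scale wX sX tX _ (endo_omega K _ a0)).
  apply: trav_commutes_omega => //; first exact: leq_subr.
  by move=> r0; apply: IH; lia.
have c_gpol := trav_commutes_gpol u up a0; rewrite gpolE // in c_gpol.
have c_top := commutes_cancel wX sX tX endo_top endo_lower c_gpol c_lower.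
have [w _ _] := endo_omega K a a0.
exact: (commutes_cong wX sX tX (ASeq_trans (tscale1 w) (omega_top K a0)) endo_top c_top).
Qed.
End DotsCommute.

Theorem lemma3p5 (K : comPzRingType) (a r : nat) (u : K) :
  (0 < a)%N -> (r <= a)%N ->
  ASeq (cp (Up a u) (tn (omega K a r) (idr u)))
       (cp (tn (idr u) (omega K a r)) (Up a u)) /\
  ASeq (cp (Dn u a) (tn (idr u) (omega K a r)))
       (cp (tn (omega K a r) (idr u)) (Dn u a)).
Proof.
move=> a0 ra.
have hU := @trav_commutes_omega K u true a r a0 ra (@trav_commutes_dot K u true r).
have hD := @trav_commutes_omega K u false a r a0 ra (@trav_commutes_dot K u false r).
by case: a a0 ra hU hD.
Qed.
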